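(* There is a functor $U:\mathsf C(\mathcal A,\mathcal P,\mathcal X)\to\mathbf{DBoo}$ defined on objects by $U(A,Z,p)=(A,C_p,\mathbb B_p)$ and on morphisms by $U(\varphi,g,f)=\varphi$.
   Context: $\mathsf C(\mathcal A,\mathcal P,\mathcal X)$: objects are triples $(A,Z,p)$ with $A$ a complete Boolean algebra, $Z$ an open dense subset of the Stone space $\mathrm{Ult}(A)$ (basic clopen sets $\varepsilon_A(a)=\{\mathfrak u\mid a\in\mathfrak u\}$), and $p:Z\to Y$ a perfect irreducible continuous surjection onto a locally compact Hausdorff space $Y$; morphisms $(\varphi,g,f):(A,Z,p)\to(A',Z',p')$ consist of a Boolean homomorphism $\varphi:A\to A'$, the map $g:Z'\to Z$, $g(\mathfrak u')=\varphi^{-1}(\mathfrak u')$, and a map $f:Y'\to Y$ with $p\circ g=f\circ p'$; composition is componentwise. Here $a\,C_p\,b$ iff $p(\varepsilon_A(a)\cap Z)\cap p(\varepsilon_A(b)\cap Z)\ne\emptyset$, and $\mathbb B_p=\{a\in A\mid\varepsilon_A(a)\subseteq Z\}$; $(A,C_p,\mathbb B_p)$ is a complete local contact algebra (Boolean algebra with contact relation and ideal of bounded elements satisfying the standard axioms). $\mathbf{DBoo}$: objects complete local contact algebras; morphisms $\varphi:(A_1,C_1,\mathbb B_1)\to(A_2,C_2,\mathbb B_2)$ are Boolean homomorphisms reflecting contact ($\varphi(a)\,C_2\,\varphi(b)\Rightarrow a\,C_1\,b$) such that for each $b'\in\mathbb B_2$ there is $b\in\mathbb B_1$ with $b'\le\varphi(b)$;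 composition is map composition. *)

From HB Require Import structures.
From mathcomp Require Import all_boot all_order.
From mathcomp Require Import boolp classical_sets cardinality topology.

Set Implicit Arguments.
Unset Strict Implicit.
Unset Printing Implicit Defensive.

Import Order.TTheory.
Local Open Scope classical_set_scope.
Local Open Scope order_scope.

Section BooleanAlgebras.
Context {d : Order.disp_t} (A : ctbDistrLatticeType d).

Definition complete_BA : Prop :=
  forall S : set A, exists s : A,
    (forall x, S x -> x <= s) /\ (forall t, (forall x, S x -> x <= t) -> s <= t).

Definition ultrafilter (u : set A) : Prop :=
  [/\ u \top, ~ u \bot,
      (forall a b, u a -> a <= b -> u b),
      (forall a b, u a -> u b -> u (Order.meet a b)) &
      (forall a, u a \/ u (Order.compl a))].

Definition Ult : set (set A) := [set u | ultrafilter u].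

Definition eps (a : A) : set (set A) := [set u | ultrafilter u /\ u a].

Definition Ult_open (W : set (set A)) : Prop :=
  W `<=` Ult /\ forall u, W u -> exists a, u a /\ eps a `<=` W.

Definition Ult_dense (W : set (set A)) : Prop :=
  forall a, eps a !=set0 -> (eps a `&` W) !=set0.

Definition sub_open (Z W : set (set A)) : Prop :=
  W `<=` Z /\ forall u, W u -> exists a, u a /\ eps a `&` Z `<=` W.

Definition sub_closed (Z F : set (set A)) : Prop :=
  F `<=` Z /\ sub_open Z (Z `\` F).

Definition sub_compact (Z K : set (set A)) : Prop :=
  K `<=` Z /\
  forall (I : Type) (O : I -> set (set A)),
    (forall i, sub_open Z (O i)) -> K `<=` \bigcup_(i in [set: I]) O i ->
    exists D : set I, finite_set D /\ K `<=` \bigcup_(i in D) O i.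

Definition perfect_irreducible_surj {Y : topologicalType}
    (Z : set (set A)) (p : set A -> Y) : Prop :=
  [/\
      (forall V : set Y, open V -> sub_open Z [set u | Z u /\ V (p u)]),
      (forall y : Y, exists u, Z u /\ p u = y),
      (forall F, sub_closed Z F -> closed (p @` F)),
      (forall y : Y, sub_compact Z [set u | Z u /\ p u = y]) &
      (forall F, sub_closed Z F -> p @` F = [set: Y] -> F = Z)].

Definition bool_hom {d' : Order.disp_t} {A' : ctbDistrLatticeType d'}
    (phi : A -> A') : Prop :=
  [/\ phi \bot = \bot, phi \top = \top,
      (forall a b, phi (Order.meet a b) = Order.meet (phi a) (phi b)),
      (forall a b, phi (Order.join a b) = Order.join (phi a) (phi b)) &
      (forall a, phi (Order.compl a) = Order.compl (phi a))].

Definition contact_rel (C : A -> A -> Prop) : Prop :=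
  [/\ (forall a b, C a b -> a != \bot /\ b != \bot),
      (forall a b c, C a (Order.join b c) <-> C a b \/ C a c),
      (forall a b, C a b <-> C b a) &
      (forall a b, Order.meet a b != \bot -> C a b)].

Definition wbelow (C : A -> A -> Prop) (a b : A) : Prop := ~ C a (Order.compl b).

Definition ideal (B : set A) : Prop :=
  [/\ B \bot, (forall a b, B b -> a <= b -> B a) &
      (forall a b, B a -> B b -> B (Order.join a b))].

Definition local_contact_algebra (C : A -> A -> Prop) (B : set A) : Prop :=
  [/\ contact_rel C, ideal B,
      (forall a c, B a -> wbelow C a c ->
          exists b, B b /\ wbelow C a b /\ wbelow C b c),
      (forall a b, C a b -> exists c, B c /\ C a (Order.meet c b)) &
      (forall a, a != \bot -> exists b, B b /\ b != \bot /\ wbelow C b a)].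

Definition complete_LCA (C : A -> A -> Prop) (B : set A) : Prop :=
  complete_BA /\ local_contact_algebra C B.

End BooleanAlgebras.

Definition CAPX_obj {d : Order.disp_t} (A : ctbDistrLatticeType d)
    (Y : topologicalType) (Z : set (set A)) (p : set A -> Y) : Prop :=
  [/\ complete_BA A, Ult_open Z, Ult_dense Z &
      [/\ hausdorff_space Y, locally_compact [set: Y] &
      perfect_irreducible_surj Z p]].

Definition gmap {d d' : Order.disp_t} {A : ctbDistrLatticeType d}
    {A' : ctbDistrLatticeType d'} (phi : A -> A') (u' : set A') : set A :=
  phi @^-1` u'.

(** morphisms (phi, g, f) : (A, Z, p) -> (A', Z', p') of C(A,P,X);
    g is determined by phi and must map Z' into Z. *)
Definition CAPX_mor {d d' : Order.disp_t} {A : ctbDistrLatticeType d}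
    {A' : ctbDistrLatticeType d'} {Y Y' : topologicalType}
    (Z : set (set A)) (p : set A -> Y) (Z' : set (set A')) (p' : set A' -> Y')
    (phi : A -> A') (f : Y' -> Y) : Prop :=
  [/\ bool_hom phi,
      (forall u', Z' u' -> Z (gmap phi u')) &
      (forall u', Z' u' -> p (gmap phi u') = f (p' u'))].

Definition Cp {d : Order.disp_t} {A : ctbDistrLatticeType d} {Y : topologicalType}
    (Z : set (set A)) (p : set A -> Y) (a b : A) : Prop :=
  (p @` (eps a `&` Z)) `&` (p @` (eps b `&` Z)) !=set0.

Definition Bp {d : Order.disp_t} {A : ctbDistrLatticeType d}
    (Z : set (set A)) : set A := [set a | eps a `<=` Z].

Definition DBoo_mor {d d' : Order.disp_t} {A : ctbDistrLatticeType d}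
    {A' : ctbDistrLatticeType d'}
    (C : A -> A -> Prop) (B : set A) (C' : A' -> A' -> Prop) (B' : set A')
    (phi : A -> A') : Prop :=
  [/\ bool_hom phi,
      (forall a b, C' (phi a) (phi b) -> C a b) &
      (forall b', B' b' -> exists b, B b /\ b' <= phi b)].

Definition Umor {d d' : Order.disp_t} {A : ctbDistrLatticeType d}
    {A' : ctbDistrLatticeType d'} {Y Y' : topologicalType}
    (phi : A -> A') (g : set A' -> set A) (f : Y' -> Y) : A -> A' := phi.

(* The functor laws hold componentwise, so the content is that U is well
   defined.  Everything rests on the compactness of the Stone space: if every
   ultrafilter containing [a] contains a member of a join-closed family [S],
   then [a] lies below a member of [S] (the prime ideal theorem, via Zorn's
   lemma).  On objects, density of [Z] gives the contact axioms and openness of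
   [Z] gives BC2; since [p] is closed and continuous, [p (eps (~` c) `&` Z)] is
   closed and every point outside it has a bounded neighbourhood [e] with
   [e << c], which together with irreducibility of [p] gives BC3.  On
   morphisms, contact is reflected because [p \o g = f \o p'], and every
   bounded [b'] lies below some [phi b] with [b] bounded because, [Z] being
   open, the clopens [eps (phi b)] cover [eps b']. *)

From HB Require Import structures.
From mathcomp Require Import all_boot all_order.
From mathcomp Require Import boolp classical_sets cardinality topology.

Set Implicit Arguments.
Unset Strict Implicit.
Unset Printing Implicit Defensive.

Import Order.Theory.
Local Open Scope classical_set_scope.
Local Open Scope order_scope.

Section Ultrafilters.
Context {d : Order.disp_t} {A : ctbDistrLatticeType d}.
Implicit Types (u F M S : set A) (x y a : A).

Definition proper_filter F : Prop :=
  [/\ F \top, ~ F \bot, (forall x y, F x -> x <= y -> F y) &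
      (forall x y, F x -> F y -> F (x `&` y))].

Definition join_closed S : Prop :=
  S \bot /\ forall x y, S x -> S y -> S (x `|` y).

Lemma uf_le u x y : ultrafilter u -> u x -> x <= y -> u y.
Proof. by case=> _ _ + _ _; apply. Qed.

Lemma uf_bot u : ultrafilter u -> ~ u \bot.
Proof. by case. Qed.

Lemma uf_meetP u x y : ultrafilter u -> u (x `&` y) <-> u x /\ u y.
Proof.
move=> uU; split=> [uxy|[ux uy]]; last by case: uU => _ _ _ + _; apply.
by split; apply: uf_le uxy _; rewrite ?leIl ?leIr.
Qed.

Lemma uf_complP u x : ultrafilter u -> u (~` x) <-> ~ u x.
Proof.
move=> uU; split=> [uCx ux|]; last by case: uU => _ _ _ _ /(_ x) [].
by apply: (uf_bot uU); rewrite -(meetxC x); exact/uf_meetP.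
Qed.

Lemma uf_joinP u x y : ultrafilter u -> u (x `|` y) <-> u x \/ u y.
Proof.
move=> uU; split=> [uxy|[ux|uy]]; last 2 first.
- exact: uf_le ux (leUl _ _).
- exact: uf_le uy (leUr _ _).
apply: contrapT => /not_orP [/(uf_complP _ uU) ux /(uf_complP _ uU) uy].
by apply/(uf_complP _ uU): uxy; rewrite complU; exact/uf_meetP.
Qed.

Lemma eps_le x y : x <= y -> eps x `<=` eps y.
Proof. by move=> xy u [uU ux]; split=> //; exact: uf_le ux xy. Qed.

Definition upmeet F a : set A := [set y | exists2 f, F f & f `&` a <= y].

Lemma upmeet_proper F a : F \top -> (forall f g, F f -> F g -> F (f `&` g)) ->
  (forall f, F f -> f `&` a != \bot) -> proper_filter (upmeet F a).
Proof.
move=> FT FI Fa; split.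
- by exists \top; rewrite ?lex1.
- by case=> f Ff; rewrite lex0; apply/negP; exact: Fa.
- by move=> y z [f Ff fy] yz; exists f => //; exact: le_trans yz.
- move=> y z [f Ff fy] [g Fg gz]; exists (f `&` g); first exact: FI.
  by rewrite lexI; apply/andP; split;
    [apply: le_trans fy | apply: le_trans gz]; rewrite leI2 ?leIl ?leIr.
Qed.

Lemma maximal_proper_filter_ultra M : proper_filter M ->
  (forall F, proper_filter F -> M `<=` F -> F `<=` M) -> ultrafilter M.
Proof.
move=> [MT Mb Mup MI] Mmax; split=> // x.
have [Mx|nMx] := pselect (M x); [by left | right].
have [f Mf fx] : exists2 f, M f & f `&` x == \bot.
  apply: contrapT => nf; apply: nMx; apply: (Mmax (upmeet M x)).
  - by apply: upmeet_proper => // f Mf; apply/negP => fx; apply: nf; exists f.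
  - by move=> y My; exists y; rewrite ?leIl.
  - by exists \top; rewrite ?meet1x.
by apply: Mup Mf _; rewrite -disj_leC.
Qed.

Lemma bigcup_chain_proper_filter (G : set (set A)) : G !=set0 ->
  (forall F, G F -> proper_filter F) -> total_on G subset ->
  proper_filter (\bigcup_(F in G) F).
Proof.
move=> [F0 GF0] Gf Gtot; split.
- by exists F0 => //; case: (Gf _ GF0).
- by case=> F /Gf [].
- move=> x y [F GF Fx] xy; exists F => //.
  by case: (Gf _ GF) => _ _ Fup _; exact: Fup Fx xy.
- move=> x y [F GF Fx] [F' GF' F'y].
  have [FF'|F'F] := Gtot _ _ GF GF'.
  + by exists F' => //; case: (Gf _ GF') => _ _ _; apply=> //; exact: FF'.
  + by exists F => //; case: (Gf _ GF) => _ _ _; apply=> //; exact: F'F.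
Qed.

Lemma proper_filter_ultra_ext F :
  proper_filter F -> exists2 u, ultrafilter u & F `<=` u.
Proof.
move=> Ff.
(* The empty set is admitted so that the union of the empty chain qualifies. *)
pose P X := X = set0 \/ proper_filter X /\ F `<=` X.
have P_chain G : G `<=` P -> total_on G subset -> P (\bigcup_(X in G) X).
  move=> GP Gtot; pose G' := G `\` [set set0].
  have -> : \bigcup_(X in G) X = \bigcup_(X in G') X.
    apply/seteqP; split=> x [X GX Xx]; exists X => //; last by case: GX.
    by split=> // /= X0; rewrite X0 in Xx.
  have [[X0 G'X0]|G'0] := pselect (G' !=set0); last first.
    left; apply/seteqP; split=> // x [X G'X _]; apply: G'0; by exists X.
  have G'f X : G' X -> proper_filter X /\ F `<=` X.
    by case=> /GP [].
  right; split; last by move=> x Fx; exists X0 => //; exact: (G'f _ G'X0).2 x Fx.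
  apply: bigcup_chain_proper_filter; first by exists X0.
    by move=> X /G'f [].
  by move=> X Y [GX _] [GY _]; exact: Gtot.
have [M [PM Mmax]] := Zorn_bigcup P_chain.
have [M0|[Mf FM]] := PM.
  exfalso; apply: (Mmax F); last by right; split.
  rewrite M0; split=> // /(_ \top); case: Ff => FT _ _ _; exact.
exists M => //; apply: maximal_proper_filter_ultra => // N Nf MN.
apply: contrapT => NM; apply: (Mmax N).
  by split=> // NM'; apply: NM => x /NM'.
by right; split=> //; exact: subset_trans MN.
Qed.

Lemma ultrafilter_cover S a : join_closed S ->
    (forall u, ultrafilter u -> u a -> exists2 e, S e & u e) ->
  exists2 e, S e & a <= e.
Proof.
move=> [S0 SU] cov; apply: contrapT => nle.
have [|u uU Fu] := @proper_filter_ultra_ext (upmeet [set y | S (~` y)] a).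
  apply: upmeet_proper => [|f g|f Sf]; rewrite /= ?compl1 ?complI //.
    exact: SU.
  apply/negP; rewrite meetC disj_leC => af; apply: nle; by exists (~` f).
have [|e Se ue] := cov u uU.
  by apply: Fu; exists \top; rewrite /= ?compl1 ?meet1x.
apply/(uf_complP _ uU): ue; apply: Fu; exists (~` e); rewrite /= ?complK ?leIl //.
Qed.

Lemma eps_neq0 a : a != \bot -> eps a !=set0.
Proof.
move=> a0; apply: contrapT => none.
have [||e /= ->] := @ultrafilter_cover [set \bot] a.
- by split=> //= x y -> ->; rewrite joinxx.
- by move=> u uU ua; exfalso; apply: none; exists u.
- by rewrite lex0 (negbTE a0).
Qed.

Lemma join_closed_bound S (D : set A) : join_closed S -> finite_set D ->
  D `<=` S -> exists2 e, S e & forall x, D x -> x <= e.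
Proof.
move=> [S0 SU] /finite_fsetP[X ->] XS; exists (\join_(x <- finmap.enum_fset X) x).
  by rewrite big_seq; elim/big_rec: _ => // x e Xx Se; exact: SU (XS _ Xx) Se.
by move=> x Xx; exact: joins_sup_seq.
Qed.

End Ultrafilters.

Lemma Bp_ideal {d} {A : ctbDistrLatticeType d} (Z : set (set A)) : ideal (Bp Z).
Proof.
split.
- by move=> u [uU u0]; case: (uf_bot uU u0).
- by move=> a b bB ab; apply: subset_trans bB; exact: eps_le.
- by move=> a b aB bB u [uU /(uf_joinP _ _ uU) [ua|ub]]; [apply: aB | apply: bB].
Qed.

Lemma sub_compact_join_cover {d} {A : ctbDistrLatticeType d}
    (Z K : set (set A)) (S : set A) :
  sub_compact Z K -> join_closed S -> (forall v, K v -> exists2 e, S e & eps e v) ->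
  exists2 e, S e & K `<=` eps e.
Proof.
move=> [KZ Kcov] Sjc Kpts.
pose O e := [set v | [/\ S e, eps e v & Z v]].
have [e|v Kv|D [Dfin KD]] := Kcov A O.
- split=> [v [] //|v [Se [_ ve] Zv]].
  by exists e; split=> // w [ew Zw].
- by have [e Se ev] := Kpts v Kv; exists e => //; split=> //; exact: KZ.
have [e Se De] := join_closed_bound Sjc (finite_setIl S Dfin) (@subIsetr _ D S).
exists e => // v /KD [e' De' [Se' e'v _]].
exact: eps_le (De _ (conj De' Se')) _ e'v.
Qed.

Section ContactRelations.
Context {d : Order.disp_t} {A : ctbDistrLatticeType d}.
Variable C : A -> A -> Prop.
Hypothesis C_contact : contact_rel C.

Lemma contactUl a b c : C (a `|` b) c <-> C a c \/ C b c.
Proof.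
have [_ CU Csym _] := C_contact.
by rewrite Csym CU !(Csym c).
Qed.

Lemma contact_le a a' b b' : a <= a' -> b <= b' -> C a b -> C a' b'.
Proof.
have [_ CU _ _] := C_contact.
move=> aa' bb' Cab; rewrite -(join_r aa') contactUl; left.
by rewrite -(join_r bb') CU; left.
Qed.

Lemma wbelow_le a a' b b' : a' <= a -> b <= b' -> wbelow C a b -> wbelow C a' b'.
Proof.
move=> a'a bb' ab Cab'; apply: ab; apply: contact_le Cab' => //.
by rewrite leC.
Qed.

Lemma wbelow0 b : wbelow C \bot b.
Proof. by case: C_contact => C0 _ _ _ /C0 []; rewrite eqxx. Qed.

Lemma wbelowUl a a' b : wbelow C a b -> wbelow C a' b -> wbelow C (a `|` a') b.
Proof. by move=> ab a'b /contactUl []. Qed.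

End ContactRelations.

Section Morphisms.
Context {d d' : Order.disp_t} {A : ctbDistrLatticeType d} {A' : ctbDistrLatticeType d'}
  {Y Y' : topologicalType} (Z : set (set A)) (p : set A -> Y)
  (Z' : set (set A')) (p' : set A' -> Y') (phi : A -> A') (f : Y' -> Y).
Hypothesis Z_open : Ult_open Z.
Hypothesis gmap_Z : forall u', Z' u' -> Z (gmap phi u').
Hypothesis gmap_p : forall u', Z' u' -> p (gmap phi u') = f (p' u').

Lemma Cp_gmap_reflect a b : Cp Z' p' (phi a) (phi b) -> Cp Z p a b.
Proof.
have img x u' : Z' u' -> u' (phi x) -> (p @` (eps x `&` Z)) (f (p' u')).
  move=> Zu' u'x; exists (gmap phi u'); last exact: gmap_p.
  by split; [split; [exact/Z_open.1/gmap_Z |] | exact: gmap_Z].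
case=> _ [[u' [[_ u'a] Zu'] <-] [v' [[_ v'b] Zv'] pv']].
by exists (f (p' u')); split; [exact: img | rewrite -pv'; exact: img].
Qed.

Lemma Bp_cofinal b' : (forall x y, phi (x `|` y) = phi x `|` phi y) ->
  Bp Z' b' -> exists b, Bp Z b /\ b' <= phi b.
Proof.
move=> phiU b'B; have [B0 _ BU] := Bp_ideal Z.
pose S x := exists2 b, Bp Z b & x <= phi b.
have Sjc : join_closed S.
  split; first by exists \bot; rewrite ?le0x.
  move=> x y [b bB xb] [c cB yc]; exists (b `|` c); first exact: BU.
  by rewrite phiU leU2.
have [|x [b bB xb] b'x] := ultrafilter_cover Sjc (a := b').
  move=> u' u'U u'b'; have Zu' := b'B _ (conj u'U u'b').
  have [e [ue eB]] := Z_open.2 _ (gmap_Z Zu').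
  by exists (phi e) => //; exists e.
by exists b; split=> //; exact: le_trans xb.
Qed.

Lemma DBoo_mor_gmap : bool_hom phi -> DBoo_mor (Cp Z p) (Bp Z) (Cp Z' p') (Bp Z') phi.
Proof.
move=> phi_hom; split=> //; first exact: Cp_gmap_reflect.
by case: phi_hom => _ _ _ phiU _ b'; exact: Bp_cofinal.
Qed.

End Morphisms.

Section ContactOfPerfectMap.
Context {d : Order.disp_t} {A : ctbDistrLatticeType d} {Y : topologicalType}
  (Z : set (set A)) (p : set A -> Y).
Hypothesis Z_Ult : Z `<=` @Ult _ A.
Hypothesis Z_open : forall u, Z u -> exists a, u a /\ Bp Z a.
Hypothesis Z_dense : Ult_dense Z.
Hypothesis p_cont : forall V : set Y, open V -> sub_open Z [set u | Z u /\ V (p u)].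
Hypothesis p_surj : forall y : Y, exists u, Z u /\ p u = y.
Hypothesis p_closed : forall F, sub_closed Z F -> closed (p @` F).
Hypothesis p_fibre : forall y : Y, sub_compact Z [set u | Z u /\ p u = y].
Hypothesis p_irr : forall F, sub_closed Z F -> p @` F = [set: Y] -> F = Z.

Let pimg a := p @` (eps a `&` Z).

Lemma Cp_contact : contact_rel (Cp Z p).
Proof.
split.
- move=> a b [_ [[u [[uU ua] _] _] [v [[vU vb] _] _]]].
  by split; apply/eqP => e0; [move: ua | move: vb]; rewrite e0; apply: uf_bot.
- move=> a b c; split.
  + case=> y [ya [v [[vU /(uf_joinP _ _ vU) vbc] Zv] vy]].
    by case: vbc => h; [left|right]; exists y; split=> //; exists v.
  + by case=> -[y [ya [v [[vU vx] Zv] vy]]]; exists y; split=> //; exists v => //;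
      split=> //; split=> //; apply/(uf_joinP _ _ vU); [left|right].
- by move=> a b; split=> -[y [ya yb]]; exists y.
- move=> a b /eps_neq0 /Z_dense [v [[vU /(uf_meetP _ _ vU) [va vb]] Zv]].
  by exists (p v); split; exists v.
Qed.

Lemma Cp_BC2 a b : Cp Z p a b -> exists c, Bp Z c /\ Cp Z p a (c `&` b).
Proof.
case=> y [ya [v [[vU vb] Zv] vy]].
have [c [vc cB]] := Z_open Zv.
exists c; split=> //; exists y; split=> //; exists v => //.
by split=> //; split=> //; exact/(uf_meetP _ _ vU).
Qed.

Lemma sub_closed_epsC b : sub_closed Z (eps (~` b) `&` Z).
Proof.
split; first by move=> u [].
split; first by move=> u [].
move=> u [Zu nub]; have uU := Z_Ult Zu.
have ub : u b.
  by apply: contrapT => nb; apply: nub; split=> //; split=> //; exact/(uf_complP _ uU).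
by exists b; split=> // v [[vU vb] Zv]; split=> // -[[_ /(uf_complP _ vU)]].
Qed.

Lemma wbelowP a b : wbelow (Cp Z p) a b <-> forall u, Z u -> u a -> ~ pimg (~` b) (p u).
Proof.
split=> [ab u Zu ua ub|ab [_ [[u [[_ ua] Zu] <-]]]]; last exact: ab.
apply: ab; exists (p u); split=> //.
by exists u => //; split=> //; split=> //; exact: Z_Ult.
Qed.

Lemma p_cont_basic V u : open V -> Z u -> V (p u) ->
  exists e, [/\ u e, Bp Z e & forall v, eps e v -> V (p v)].
Proof.
move=> oV Zu Vu; have [_ /(_ u (conj Zu Vu)) [e1 [ue1 e1V]]] := p_cont oV.
have [e2 [ue2 e2B]] := Z_open Zu.
have uU := Z_Ult Zu.
have e12B : Bp Z (e1 `&` e2) by apply: subset_trans e2B; apply: eps_le; exact: leIr.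
exists (e1 `&` e2); split=> //; first exact/(uf_meetP _ _ uU).
move=> v ev; case: (e1V v) => //.
by split; [apply: eps_le ev; exact: leIl | exact: e12B].
Qed.

Lemma wbelow_nbhd b w : Z w -> ~ pimg (~` b) (p w) ->
  exists e, [/\ w e, Bp Z e & wbelow (Cp Z p) e b].
Proof.
move=> Zw nw; have [|e [we eB eV]] := @p_cont_basic (~` pimg (~` b)) _ _ Zw nw.
  exact/closed_openC/p_closed/sub_closed_epsC.
by exists e; split=> //; apply/wbelowP => v Zv ve; apply: eV; split=> //; exact: Z_Ult.
Qed.

Lemma Cp_BC3 a : a != \bot -> exists b, Bp Z b /\ b != \bot /\ wbelow (Cp Z p) b a.
Proof.
move=> /eps_neq0 /Z_dense [w [[_ wa] Zw]].
have [y ny] : exists y, ~ pimg (~` a) y.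
  apply/existsNP => full.
  have EZ : eps (~` a) `&` Z = Z.
    by apply: p_irr (sub_closed_epsC a) _; apply/seteqP; split=> // y _; exact: full.
  by move: Zw; rewrite -EZ => -[[wU /(uf_complP _ wU)]].
have [v [Zv vy]] := p_surj y; rewrite -vy in ny.
have [e [ve eB ea]] := wbelow_nbhd Zv ny.
exists e; split=> //; split=> //.
by apply/eqP => e0; move: ve; rewrite e0; exact: uf_bot (Z_Ult Zv).
Qed.

(* Compactness is used twice: of each fibre of [p] over [p (eps a)], to find a
   bounded [b << c] whose clopen contains that fibre, and then of [eps a], to
   glue finitely many such [b]. *)
Lemma Cp_BC1 a c : Bp Z a -> wbelow (Cp Z p) a c ->
  exists b, Bp Z b /\ wbelow (Cp Z p) a b /\ wbelow (Cp Z p) b c.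
Proof.
move=> aB ac; have [B0 _ BU] := Bp_ideal Z.
pose good e := Bp Z e /\ wbelow (Cp Z p) e c.
have good_jc : join_closed good.
  split; first by split; [exact: B0 | exact: (wbelow0 Cp_contact)].
  by move=> x y [xB xc] [yB yc]; split; [exact: BU | exact: (wbelowUl Cp_contact)].
have fibre_good w : Z w -> w a -> exists2 b, good b & forall v, Z v -> p v = p w -> v b.
  move=> Zw wa.
  have [v [Zv pv]|b gb fb] := sub_compact_join_cover (p_fibre (p w)) good_jc.
    have nv : ~ pimg (~` c) (p v) by rewrite pv; exact: (wbelowP a c).1 ac w Zw wa.
    have [e [ve eB ec]] := wbelow_nbhd Zv nv.
    by exists e => //; split=> //; exact: Z_Ult.
  by exists b => // v Zv pv; have [] := fb v (conj Zv pv).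
pose S x := exists2 b, good b & wbelow (Cp Z p) x b.
have S_jc : join_closed S.
  split; first by exists \bot; [exact: good_jc.1 | exact: (wbelow0 Cp_contact)].
  move=> x y [b gb xb] [b' gb' yb']; exists (b `|` b'); first exact: good_jc.2.
  exact: (wbelowUl Cp_contact (wbelow_le Cp_contact (lexx x) (leUl b b') xb)
                              (wbelow_le Cp_contact (lexx y) (leUr b' b) yb')).
have [|x [b [bB bc] xb] ax] := ultrafilter_cover S_jc (a := a).
  move=> w wU wa; have Zw : Z w := aB _ (conj wU wa).
  have [b gb fb] := fibre_good w Zw wa.
  have [|e [we eB eb]] := wbelow_nbhd (b := b) Zw.
    by case=> v [[vU /(uf_complP _ vU) nvb] Zv] pv; apply: nvb; exact: fb.
  by exists e => //; exists b.
exists b; split=> //; split=> //.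
exact: (wbelow_le Cp_contact ax (lexx b) xb).
Qed.

Lemma Cp_local_contact_algebra : local_contact_algebra (Cp Z p) (Bp Z).
Proof.
split; [exact: Cp_contact | exact: Bp_ideal | exact: Cp_BC1 | exact: Cp_BC2 |
        exact: Cp_BC3].
Qed.

End ContactOfPerfectMap.

Theorem proposition3p13 :
  (* U is well defined on objects: (A, C_p, B_p) is an object of DBoo *)
  (forall (d : Order.disp_t) (A : ctbDistrLatticeType d) (Y : topologicalType)
          (Z : set (set A)) (p : set A -> Y),
      CAPX_obj Z p -> complete_LCA (Cp Z p) (Bp Z)) /\
  (* U is well defined on morphisms: phi is a DBoo-morphism *)
  (forall (d d' : Order.disp_t) (A : ctbDistrLatticeType d)
          (A' : ctbDistrLatticeType d') (Y Y' : topologicalType)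
          (Z : set (set A)) (p : set A -> Y)
          (Z' : set (set A')) (p' : set A' -> Y') (phi : A -> A') (f : Y' -> Y),
      CAPX_obj Z p -> CAPX_obj Z' p' -> CAPX_mor Z p Z' p' phi f ->
      DBoo_mor (Cp Z p) (Bp Z) (Cp Z' p') (Bp Z') (Umor phi (gmap phi) f)) /\
  (* U preserves identities *)
  (forall (d : Order.disp_t) (A : ctbDistrLatticeType d) (Y : topologicalType),
      Umor (@id A) (@id (set A)) (@id Y) = id) /\
  (* U preserves composition (componentwise composition in C(A,P,X)) *)
  (forall (d d' d'' : Order.disp_t) (A : ctbDistrLatticeType d)
          (A' : ctbDistrLatticeType d') (A'' : ctbDistrLatticeType d'')
          (Y Y' Y'' : topologicalType)
          (phi : A -> A') (g : set A' -> set A) (f : Y' -> Y)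
          (psi : A' -> A'') (h : set A'' -> set A') (k : Y'' -> Y'),
      Umor (psi \o phi) (g \o h) (f \o k) = Umor psi h k \o Umor phi g f).
Proof.
split.
  move=> d A Y Z p [A_complete [Z_Ult Z_open] Z_dense [_ _ [cont surj clos fib irr]]].
  split=> //.
  exact: (Cp_local_contact_algebra Z_Ult Z_open Z_dense cont surj clos fib irr).
split; last by split.
move=> d d' A A' Y Y' Z p Z' p' phi f [_ Z_open _ _] _ [phi_hom gmap_Z gmap_p].
exact: (DBoo_mor_gmap Z_open gmap_Z gmap_p phi_hom).
Qed.
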